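(* Let $\beta>0$, let $F$ be symmetric, positive on $\Gamma_+$, homogeneous of degree 1, with $F^\beta(1,\dots,1)=1$ and $\partial F/\partial\lambda_i>0$, and let $G:\mathbb{S}^n\times(0,\infty)\times(0,\infty)\to(0,\infty)$. Assume that whenever $G(x,ms_1,ms_2)\ge G(x,s_1,s_2)m^{-\beta}$ holds for some $x\in\mathbb{S}^n$ and positive $s_1,s_2,m$, necessarily $m\le1$. Then for any constant $c$, the equation $$G\big(x,u,\sqrt{u^2+|Du|^2}\big)F^\beta(D^2u+uI)=c\quad\text{on }\mathbb{S}^n$$ has at most one positive, smooth, uniformly convex solution $u$.
   Context: $\Gamma_+=\{\lambda\in\mathbb{R}^n:\lambda_i>0\}$; $F$ is applied to symmetric matrices via eigenvalues. $D$ is covariant differentiation on the round $\mathbb{S}^n$, $I$ the identity; uniformly convex means $D^2u+uI>0$. Note $\sqrt{u^2+|Du|^2}$ is the radial function $\rho$ of the convex body with support function $u$. *)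

From HB Require Import structures.
From mathcomp Require Import all_boot all_order all_algebra perm.
From mathcomp Require Import all_classical all_reals all_analysis.
Set Implicit Arguments. Unset Strict Implicit. Unset Printing Implicit Defensive.
Import Order.TTheory GRing.Theory Num.Theory.
Import numFieldNormedType.Exports.
Local Open Scope ring_scope.

Section Defs.
Variable R : realType.

Definition dotv N (x y : 'rV[R]_N) : R := \sum_i x 0 i * y 0 i.
Definition enorm N (x : 'rV[R]_N) : R := Num.sqrt (dotv x x).
Definition on_sphere n (x : 'rV[R]_n.+1) : Prop := enorm x = 1.
Definition ebase N (i : 'I_N) : 'rV[R]_N := \row_j (if j == i then 1 else 0).

Fixpoint iterD N (vs : seq 'rV[R]_N) (f : 'rV[R]_N -> R) : 'rV[R]_N -> R :=
  match vs with
  | [::] => f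
  | v :: vs' => fun y => 'D_v (iterD vs' f) y
  end.

Definition smooth_on N (U : set 'rV[R]_N) (f : 'rV[R]_N -> R) : Prop :=
  forall (vs : seq 'rV[R]_N) (y : 'rV[R]_N), U y ->
    {for y, continuous (iterD vs f)} /\ (forall v, derivable (iterD vs f) y v).

(* A function u on S^n is represented by u : 'rV_(n+1) -> R (only values on
   S^n matter); its 0-homogeneous extension to R^{n+1}\{0}. *)
Definition ext0 n (u : 'rV[R]_n.+1 -> R) (y : 'rV[R]_n.+1) : R :=
  u ((enorm y)^-1 *: y).

Definition smooth_sphere n (u : 'rV[R]_n.+1 -> R) : Prop :=
  smooth_on [set y | y != 0] (ext0 u).

(* Euclidean gradient of the extension: at x in S^n it is the covariant
   gradient Du(x) (a tangent vector) *)
Definition grad_sph n (u : 'rV[R]_n.+1 -> R) (x : 'rV[R]_n.+1) : 'rV[R]_n.+1 :=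
  \row_i ('D_(ebase i) (ext0 u) x).

(* Euclidean Hessian of the 0-homogeneous extension; restricted to the tangent
   space T_x S^n = x^perp it is the covariant Hessian D^2 u(x) *)
Definition hess_sph n (u : 'rV[R]_n.+1 -> R) (x : 'rV[R]_n.+1) : 'M[R]_n.+1 :=
  \matrix_(i, j) ('D_(ebase i) (fun y => 'D_(ebase j) (ext0 u) y) x).

Definition tangent_frame n (x : 'rV[R]_n.+1) (E : 'M[R]_(n, n.+1)) : Prop :=
  E *m E^T = 1%:M /\ E *m x^T = 0.

Definition unif_convex_at n (u : 'rV[R]_n.+1 -> R) (x : 'rV[R]_n.+1) : Prop :=
  forall v : 'rV[R]_n.+1, v *m x^T = 0 -> v != 0 ->
    0 < (v *m hess_sph u x *m v^T) 0 0 + u x * dotv v v.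

(* The equation  G(x,u,sqrt(u^2+|Du|^2)) F^beta(D^2u + uI) = c  at x, with
   F applied to the symmetric matrix D^2u+uI through its eigenvalues lam
   (the matrix of D^2u+uI in the orthonormal frame E is diag lam). *)
Definition equation_at n (F : 'rV[R]_n -> R) (beta : R)
  (G : 'rV[R]_n.+1 -> R -> R -> R) (c : R) (u : 'rV[R]_n.+1 -> R)
  (x : 'rV[R]_n.+1) : Prop :=
  exists (E : 'M[R]_(n, n.+1)) (lam : 'rV[R]_n),
    tangent_frame x E /\
    E *m hess_sph u x *m E^T + u x *: 1%:M = diag_mx lam /\
    G x (u x) (Num.sqrt (u x ^+ 2 + dotv (grad_sph u x) (grad_sph u x)))
      * (F lam `^ beta) = c.

Definition is_solution n F beta G c (u : 'rV[R]_n.+1 -> R) : Prop :=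
  smooth_sphere u /\
  (forall x, on_sphere x -> 0 < u x) /\
  (forall x, on_sphere x -> unif_convex_at u x) /\
  (forall x, on_sphere x -> equation_at F beta G c u x).

Definition Gamma_plus n (lam : 'rV[R]_n) : Prop := forall i, 0 < lam 0 i.

End Defs.

(* Compare two solutions [u1], [u2] at a point [p] where [u1 / u2] attains
   its maximum [M].  Then [u1 <= M u2] with contact at [p], so at [p]
   [u1 = M u2], [Du1 = M Du2] (hence [rho1 = M rho2] for the radial functions)
   and [D^2 u1 + u1 I <= M (D^2 u2 + u2 I)].  By the min-max principle the
   ordered eigenvalues satisfy the same inequality, and since [F] is
   symmetric, increasing and 1-homogeneous, [F(lam1) <= M F(lam2)].  The two
   equations at [p] then give [G(p, M u2, M rho2) >= G(p, u2, rho2) M^-beta],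
   which forces [M <= 1]; thus [u1 <= u2], and [u1 = u2] by symmetry. *)

From Pilot Require Import Defs.
From mathcomp Require Import all_boot all_order all_algebra perm.
From mathcomp Require Import all_classical all_reals all_analysis.
From mathcomp Require Import lra ring zify.
Set Implicit Arguments. Unset Strict Implicit. Unset Printing Implicit Defensive.
Import Order.TTheory GRing.Theory Num.Theory.
Import numFieldNormedType.Exports.
Local Open Scope ring_scope.

Section directional_derivatives.
Variable R : realType.
Local Open Scope classical_set_scope.

Lemma MVT_centered (f df : R -> R) (b : R) :
  (forall t : R, `|t| <= `|b| -> is_derive t (1 : R) f (df t)) ->
  exists2 c, `|c| <= `|b| & f b - f 0 = df c * b.
Proof.
move=> fdf.
have f_cont a a' : `|a| <= `|b| -> `|a'| <= `|b| -> {within `[a, a'], continuous f}.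
  move=> ab a'b; apply: derivable_within_continuous => t.
  rewrite in_itv /= => /andP[a_t t_a].
  apply: (@ex_derive _ _ _ _ _ _ (df t)); apply: fdf.
  move: ab a'b; rewrite !ler_norml => /andP[ba _] /andP[_ a'b].
  by rewrite (le_trans ba a_t) (le_trans t_a a'b).
have b0 : `|0 : R| <= `|b| by rewrite normr0.
case: (leP 0 b) => hb.
  have [|c cb ->] := @MVT_segment R f df 0 b hb _ (f_cont _ _ b0 (lexx _)).
    move=> t; rewrite in_itv /= => /andP[t0 tb]; apply: fdf.
    by rewrite !ger0_norm ?(ltW t0) // ltW.
  by exists c; rewrite ?subr0 // !ger0_norm ?(itvP cb).
have [|c cb fE] := @MVT_segment R f df b 0 (ltW hb) _ (f_cont _ _ (lexx _) b0).
  move=> t; rewrite in_itv /= => /andP[bt t0]; apply: fdf.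
  by rewrite !ltr0_norm // lerN2 ltW.
exists c; last by rewrite -opprB fE sub0r mulrN opprK.
move: cb; rewrite in_itv /= ler_norml ltr0_norm // opprK => /andP[-> c0] /=.
lra.
Qed.

Let line_quotient N (g : 'rV[R]_N -> R) z w s :
  (fun h : R => h^-1 *: (((fun t : R => g (t *: w + z)) \o shift s) (h *: 1)
                          - g (s *: w + z)))
  = (fun h : R => h^-1 *: ((g \o shift (s *: w + z)) (h *: w) - g (s *: w + z))).
Proof.
apply/funext => h /=; congr (_ *: (_ - _)); congr g.
by rewrite [h *: 1]mulr1 scalerDl addrA.
Qed.

Lemma derivable_line N (g : 'rV[R]_N -> R) z w s :
  derivable (fun t : R => g (t *: w + z)) s 1 <-> derivable g (s *: w + z) w.
Proof. by rewrite /derivable line_quotient. Qed.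

Lemma derive_line N (g : 'rV[R]_N -> R) z w s :
  'D_1 (fun t : R => g (t *: w + z)) s = 'D_w g (s *: w + z).
Proof. by rewrite /derive line_quotient. Qed.

Let shift_in_ball N (y v e : 'rV[R]_N) (a h c r : R) :
  `|h| * (`|v| + `|a| * `|e| + 1) < r -> `|c| <= `|a * h| ->
  `|y - (c *: e + (h *: v + y))| < r.
Proof.
move=> hr ca; rewrite addrA opprD addrCA subrr addr0 normrN.
apply: le_lt_trans (ler_normD _ _) _; rewrite !normrZ.
have ce : `|c| * `|e| <= `|h| * (`|a| * `|e|).
  by rewrite mulrA [`|h| * _]mulrC -normrM ler_wpM2r.
move: hr; rewrite !mulrDr mulr1; have := normr_ge0 h; lra.
Qed.

(* Mean value theorem along [e] from the moving base point [h v + y], then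
   continuity of [D_e g] at [y]. *)
Lemma increment_quotient_cvg N (g : 'rV[R]_N -> R) y v e (a : R) :
  (\forall z \near y, derivable g z e) -> {for y, continuous ('D_e g)} ->
  (fun h : R => h^-1 * (g (h *: (v + a *: e) + y) - g (h *: v + y))) @ 0^'
     --> a * 'D_e g y.
Proof.
move=> de ce; apply/cvgrPdist_lt => eps eps0.
pose eps' := eps / (`|a| + 1).
have eps'0 : 0 < eps' by rewrite divr_gt0 // ltr_pwDr.
have : \forall z \near y, derivable g z e /\ `|'D_e g y - 'D_e g z| < eps'.
  near=> z; split; near: z; first exact: de.
  by move/cvgrPdist_lt : ce; apply.
move=> /nbhs_normP [r r0 near_y].
pose K := `|v| + `|a| * `|e| + 1.
have K0 : 0 < K by rewrite ltr_pwDr // addr_ge0 // mulr_ge0.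
near=> h.
have h0 : h != 0 by near: h; exact: nbhs_dnbhs_neq.
have hK : `|h| * K < r.
  by rewrite -ltr_pdivlMr //; near: h; apply: dnbhs0_lt; rewrite divr_gt0.
have near_y_seg c : `|c| <= `|a * h| ->
    derivable g (c *: e + (h *: v + y)) e /\
    `|'D_e g y - 'D_e g (c *: e + (h *: v + y))| < eps'.
  by move=> ca; apply: near_y; exact: shift_in_ball hK ca.
have [|c ca gE] := @MVT_centered (fun s => g (s *: e + (h *: v + y)))
    (fun s => 'D_e g (s *: e + (h *: v + y))) (a * h).
  move=> t ta; apply: DeriveDef; last exact: derive_line.
  exact/derivable_line/(near_y_seg t ta).1.
have -> : h *: (v + a *: e) + y = (a * h) *: e + (h *: v + y).
  by rewrite scalerDr scalerA [h * a]mulrC addrCA addrA.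
rewrite -[X in _ - g X](add0r (h *: v + y)) -[X in _ - g (X + _)](scale0r e).
rewrite gE mulrCA [h^-1 * _]mulrCA mulVf // mulr1.
rewrite [X in _ - X]mulrC -mulrBr normrM mulrC.
apply: (@le_lt_trans _ _ (eps' * `|a|)).
  by rewrite ler_wpM2r // ltW // (near_y_seg c ca).2.
by rewrite /eps' -mulrA gtr_pMr // ltr_pdivrMl ?mulr1 ?ltrDl.
Unshelve. all: by end_near. Qed.

Lemma derive_addZ N (g : 'rV[R]_N -> R) y v e (a : R) :
  derivable g y v ->
  (\forall z \near y, derivable g z e) -> {for y, continuous ('D_e g)} ->
  derivable g y (v + a *: e) /\ 'D_(v + a *: e) g y = 'D_v g y + a * 'D_e g y.
Proof.
move=> dv de ce.
have quotE : (fun h : R => h^-1 *: ((g \o shift y) (h *: (v + a *: e)) - g y)) =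
    (fun h : R => h^-1 *: ((g \o shift y) (h *: v) - g y)) \+
    (fun h : R => h^-1 * (g (h *: (v + a *: e) + y) - g (h *: v + y))).
  apply/funext => h /=; rewrite -mulrDr; congr (_ * _).
  by rewrite [in RHS]addrC addrA subrK addrC.
have cvg_quot : (fun h : R => h^-1 *: ((g \o shift y) (h *: (v + a *: e)) - g y))
    @ 0^' --> 'D_v g y + a * 'D_e g y.
  by rewrite quotE; apply: cvgD; [exact: dv | exact: increment_quotient_cvg].
split; first by apply/cvg_ex; eexists; exact: cvg_quot.
exact: cvg_lim cvg_quot.
Qed.

Lemma ebase_delta N (j : 'I_N) : ebase R j = delta_mx 0 j.
Proof. by apply/rowP => k; rewrite !mxE; case: (k == j). Qed.

Lemma row_sum_ebase N (v : 'rV[R]_N) : v = \sum_j v 0 j *: ebase R j.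
Proof. by rewrite [LHS]row_sum_delta; apply: eq_bigr => j _; rewrite ebase_delta. Qed.

Lemma derive_sum_ebase N (g : 'rV[R]_N -> R) y v :
  (forall j, \forall z \near y, derivable g z (ebase R j)) ->
  (forall j, {for y, continuous ('D_(ebase R j) g)}) ->
  derivable g y v /\ 'D_v g y = \sum_j v 0 j * 'D_(ebase R j) g y.
Proof.
move=> de ce.
suff : forall s : seq 'I_N,
    derivable g y (\sum_(j <- s) v 0 j *: ebase R j) /\
    'D_(\sum_(j <- s) v 0 j *: ebase R j) g y
      = \sum_(j <- s) v 0 j * 'D_(ebase R j) g y.
  by move=> /(_ (index_enum _)); rewrite -row_sum_ebase.
elim => [|j s [IH1 IH2]].
  by rewrite !big_nil; split; [exact: derivable0 | exact: derive0].
rewrite !big_cons addrC [X in _ = X]addrC -IH2.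
exact: derive_addZ.
Qed.

End directional_derivatives.

Section second_derivative_test.
Variable R : realType.

Lemma local_max_derive_eq0 (phi : R -> R) (d : R) : 0 < d ->
  (forall t, `|t| < d -> derivable phi t 1) ->
  (forall t, `|t| < d -> phi t <= phi 0) -> 'D_1 phi 0 = 0.
Proof.
move=> d0 dphi phi_max.
have inI t : t \in `]-d, d[%R -> `|t| < d.
  by rewrite in_itv /= ltr_norml.
have : is_derive (0 : R) (1 : R) phi 0.
  apply: (@derive1_at_max R phi (-d) d).
  - by have := ltW d0; lra.
  - by move=> t /inI /dphi.
  - by rewrite in_itv /= oppr_lt0 d0.
  - by move=> t /inI /phi_max.
by case.
Qed.

Lemma derive_gt0_right (g : R -> R) : g 0 = 0 -> derivable g 0 1 ->
  0 < 'D_1 g 0 -> exists2 r, 0 < r & forall t, 0 < t < r -> 0 < g t.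
Proof.
move=> g0 dg Dg0.
move/cvgrPdist_lt : dg => /(_ _ Dg0); rewrite near_withinE => /nbhs_normP [r r0 near0].
exists r => // t /andP[t0 tr].
have t_ball : ball_ Num.Def.normr (0 : R) r t by rewrite /ball_ /= sub0r normrN gtr0_norm.
have quotE : t^-1 *: ((g \o shift 0) t%:A - g 0) = t^-1 * g t.
  by rewrite /= [t%:A]mulr1 addr0 g0 subr0.
have := near0 t t_ball (lt0r_neq0 t0); rewrite quotE => quot_near.
have : 0 < t^-1 * g t.
  by move: quot_near; have := ler_norm ('D_1 g 0 - t^-1 * g t); lra.
by rewrite pmulr_rgt0 // invr_gt0.
Qed.

(* If [phi''(0) > 0] then [phi' > 0] just right of [0], so [phi] increases
   there by the mean value theorem. *)
Lemma local_max_derive2_le0 (phi : R -> R) (d : R) : 0 < d ->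
  (forall t, `|t| < d -> derivable phi t 1) ->
  (forall t, `|t| < d -> phi t <= phi 0) ->
  derivable ('D_1 phi) 0 1 -> 'D_1 ('D_1 phi) 0 <= 0.
Proof.
move=> d0 dphi phi_max d2phi; rewrite leNgt; apply/negP => D2pos.
have [r r0 Dphi_pos] := derive_gt0_right (local_max_derive_eq0 d0 dphi phi_max)
  d2phi D2pos.
pose t := Num.min r d / 2.
have t0 : 0 < t by rewrite divr_gt0 // lt_min r0 d0.
have [tr td] : t < r /\ t < d.
  have : t < Num.min r d by rewrite /t ltr_pdivrMr // ltr_pMr ?ltr1n // lt_min r0 d0.
  by rewrite lt_min => /andP[].
have small s : 0 <= s <= t -> `|s| < d.
  by move=> /andP[s0 st]; rewrite ger0_norm //; exact: le_lt_trans td.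
have [||c ct phiE] := @MVT R phi ('D_1 phi) 0 t t0.
- move=> s; rewrite in_itv /= => /andP[s0 st]; apply: DeriveDef => //.
  by apply: dphi; apply: small; rewrite !ltW.
- apply: derivable_within_continuous => s; rewrite in_itv /=.
  by move=> /small /dphi.
have : 0 < phi t - phi 0.
  rewrite phiE subr0 mulr_gt0 // Dphi_pos // (itvP ct) /=.
  by apply: lt_trans tr; rewrite (itvP ct).
by rewrite subr_gt0 ltNge phi_max // small // (ltW t0) lexx.
Qed.

Lemma local_max_directional N (g : 'rV[R]_N -> R) (p v : 'rV[R]_N) :
  (\forall z \near p, derivable g z v /\ g z <= g p) ->
  derivable ('D_v g) p v ->
  'D_v g p = 0 /\ 'D_v ('D_v g) p <= 0.
Proof.
move=> /nbhs_normP [r r0 near_p] d2g.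
pose phi t := g (t *: v + p).
pose d := r / (`|v| + 1).
have d0 : 0 < d by rewrite divr_gt0 // ltr_pwDr.
have line_near t : `|t| < d -> derivable g (t *: v + p) v /\ g (t *: v + p) <= g p.
  move=> td; apply: near_p; rewrite /= opprD addrCA subrr addr0 normrN normrZ.
  apply: le_lt_trans (_ : `|t| * (`|v| + 1) < r); last by rewrite -ltr_pdivlMr // ltr_pwDr.
  by rewrite ler_wpM2l // lerDl.
have dphi t : `|t| < d -> derivable phi t 1.
  by move=> /line_near [dg _]; rewrite /phi; apply/derivable_line.
have phi_max t : `|t| < d -> phi t <= phi 0.
  by move=> /line_near [_]; rewrite /phi scale0r add0r.
have DphiE : 'D_1 phi = fun t => 'D_v g (t *: v + p).
  by apply/funext => t; rewrite /phi derive_line.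
have d2phi : derivable ('D_1 phi) 0 1.
  by rewrite DphiE; apply/(derivable_line ('D_v g)); rewrite scale0r add0r.
split.
  by have := local_max_derive_eq0 d0 dphi phi_max; rewrite /phi derive_line scale0r add0r.
have := local_max_derive2_le0 d0 dphi phi_max d2phi.
by rewrite DphiE (derive_line ('D_v g)) scale0r add0r.
Qed.

End second_derivative_test.

Section smooth_functions.
Variables (R : realType) (N : nat) (U : set 'rV[R]_N).
Hypothesis U_open : open U.

(* [Defs.iterD] is qualified because [iterD] alone is a lemma of ssrnat. *)
Lemma smooth_derivable_near (f : 'rV[R]_N -> R) (vs : seq 'rV[R]_N) y v :
  smooth_on U f -> U y -> \forall z \near y, derivable (Defs.iterD vs f) z v.
Proof.
move=> sf Uy; near=> z; apply: (sf vs z _).2.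
by near: z; exact: open_nbhs_nbhs.
Unshelve. all: by end_near. Qed.

Lemma smooth_deriveE (f : 'rV[R]_N -> R) (vs : seq 'rV[R]_N) y v :
  smooth_on U f -> U y ->
  'D_v (Defs.iterD vs f) y = \sum_j v 0 j * 'D_(ebase R j) (Defs.iterD vs f) y.
Proof.
move=> sf Uy.
have dnear j := @smooth_derivable_near f vs y (ebase R j) sf Uy.
exact: (derive_sum_ebase v dnear (fun j => (sf (ebase R j :: vs) y Uy).1)).2.
Qed.

Lemma smooth_derive2E (f : 'rV[R]_N -> R) (x v : 'rV[R]_N) :
  smooth_on U f -> U x ->
  'D_v ('D_v f) x =
  (v *m (\matrix_(i, j) 'D_(ebase R i) ('D_(ebase R j) f) x) *m v^T) 0 0.
Proof.
move=> sf Ux.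
have dDf j : derivable ('D_(ebase R j) f) x v := (sf [:: ebase R j] x Ux).2 v.
have -> : 'D_v ('D_v f) x = 'D_v (\sum_j (fun z => v 0 j * 'D_(ebase R j) f z)) x.
  apply: near_eq_derive; near=> z; rewrite fct_sumE.
  by apply: (smooth_deriveE [::] v sf); near: z; exact: open_nbhs_nbhs.
rewrite derive_sum => [|j]; last exact: derivableZ.
rewrite mxE; apply: eq_bigr => j _.
rewrite (deriveZ _ (dDf j)) (smooth_deriveE [:: ebase R j] v sf Ux) /= !mxE.
rewrite scaler_sumr mulr_suml; apply: eq_bigr => i _.
by rewrite !mxE -[_ *: _]/(_ * _); ring.
Unshelve. all: by end_near. Qed.

(* Where [f1 <= M f2] touches with equality, [f1 - M f2] has a local maximum. *)
Lemma contact_derive (f1 f2 : 'rV[R]_N -> R) (M : R) (p v : 'rV[R]_N) :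
  smooth_on U f1 -> smooth_on U f2 -> U p ->
  (forall y, U y -> f1 y <= M * f2 y) -> f1 p = M * f2 p ->
  'D_v f1 p = M * 'D_v f2 p /\ 'D_v ('D_v f1) p <= M * 'D_v ('D_v f2) p.
Proof.
move=> s1 s2 Up le_f eq_p.
have Up_near : \forall z \near p, U z by exact: open_nbhs_nbhs.
pose g z := f1 z - M * f2 z.
have dg z : U z -> derivable f1 z v /\ derivable f2 z v.
  by move=> Uz; split; [exact: (s1 [::] z Uz).2 | exact: (s2 [::] z Uz).2].
have DgE z : U z -> 'D_v g z = 'D_v f1 z - M * 'D_v f2 z.
  by move=> /dg [d1 d2]; rewrite deriveB ?deriveZ //; exact: derivableZ.
have [d1 d2] : derivable ('D_v f1) p v /\ derivable ('D_v f2) p v.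
  by split; [exact: (s1 [:: v] p Up).2 | exact: (s2 [:: v] p Up).2].
have DgE_near : \forall z \near p, 'D_v f1 z - M * 'D_v f2 z = 'D_v g z.
  by near=> z; rewrite DgE //; near: z.
have d2g : derivable ('D_v g) p v.
  apply: near_eq_derivable DgE_near _.
  by apply: derivableB => //; exact: derivableZ.
have [|Dg0 D2g_le0] := @local_max_directional R N g p v _ d2g.
  near=> z; have Uz : U z by near: z.
  have [d1z d2z] := dg z Uz.
  split; first by apply: derivableB => //; exact: derivableZ.
  by rewrite /g eq_p subrr subr_le0 le_f.
split; first by apply/eqP; rewrite -subr_eq0 -DgE // Dg0.
move: D2g_le0; rewrite -(near_eq_derive _ DgE_near) deriveB ?deriveZ ?subr_le0 //.
exact: derivableZ.
Unshelve. all: by end_near. Qed.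

End smooth_functions.

Section sphere.
Variable R : realType.
Local Open Scope classical_set_scope.

Lemma dotvE N (y z : 'rV[R]_N) : dotv y z = (y *m z^T) 0 0.
Proof. by rewrite /dotv mxE; apply: eq_bigr => i _; rewrite mxE. Qed.

Lemma dotvZ N (t : R) (y : 'rV[R]_N) : dotv (t *: y) (t *: y) = t ^+ 2 * dotv y y.
Proof. by rewrite /dotv mulr_sumr; apply: eq_bigr => i _; rewrite !mxE; ring. Qed.

Lemma dotv_ge0 N (y : 'rV[R]_N) : 0 <= dotv y y.
Proof. by rewrite sumr_ge0 // => i _; rewrite -expr2 sqr_ge0. Qed.

Lemma dotv_gt0 N (y : 'rV[R]_N) : y != 0 -> 0 < dotv y y.
Proof.
move=> y0; rewrite lt_def dotv_ge0 andbT; apply: contra y0 => /eqP y2_eq0.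
apply/eqP/rowP => i; rewrite mxE; apply/eqP; rewrite -sqrf_eq0.
have y2_ge0 j : true -> 0 <= y 0 j * y 0 j by rewrite -expr2 sqr_ge0.
by rewrite expr2 (psumr_eq0P y2_ge0 y2_eq0).
Qed.

Lemma enormZ N (t : R) (y : 'rV[R]_N) : enorm (t *: y) = `|t| * enorm y.
Proof. by rewrite /enorm dotvZ sqrtrM ?sqr_ge0 // sqrtr_sqr. Qed.

Lemma enorm_gt0 N (y : 'rV[R]_N) : y != 0 -> 0 < enorm y.
Proof. by move=> y0; rewrite sqrtr_gt0 dotv_gt0. Qed.

Lemma sphere_neq0 n (x : 'rV[R]_n.+1) : on_sphere x -> x != 0.
Proof.
rewrite /on_sphere; apply: contra_eqN => /eqP ->.
by rewrite -(scale0r (0 : 'rV[R]_n.+1)) enormZ normr0 mul0r eq_sym oner_eq0.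
Qed.

Lemma sphere_normalize n (y : 'rV[R]_n.+1) : y != 0 -> on_sphere ((enorm y)^-1 *: y).
Proof.
move=> y0; rewrite /on_sphere enormZ ger0_norm ?invr_ge0 ?ltW ?enorm_gt0 //.
by rewrite mulVf // gt_eqF // enorm_gt0.
Qed.

Lemma ext0_sphere n (u : 'rV[R]_n.+1 -> R) x : on_sphere x -> ext0 u x = u x.
Proof. by rewrite /ext0 /on_sphere => ->; rewrite invr1 scale1r. Qed.

Lemma ext0Z n (u : 'rV[R]_n.+1 -> R) (t : R) y : 0 < t -> ext0 u (t *: y) = ext0 u y.
Proof.
move=> t0; rewrite /ext0 enormZ gtr0_norm // invfM scalerA mulrAC mulVf ?mul1r //.
by rewrite gt_eqF.
Qed.

Lemma open_neq0 N : open [set y : 'rV[R]_N | y != 0].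
Proof.
rewrite openE => y /= y0; suff : \forall z \near y, z != 0 by [].
apply/nbhs_normP; exists `|y|; first by rewrite /= normr_gt0.
by move=> z /=; apply: contraTneq => ->; rewrite subr0 ltxx.
Qed.

(* Scale invariance reduces the maximum over [y != 0] to the compact unit
   sphere of the (sup) norm. *)
Lemma scale_invariant_max n (p : 'rV[R]_n.+1 -> R) :
  (forall y, y != 0 -> {for y, continuous p}) ->
  (forall (t : R) y, 0 < t -> p (t *: y) = p y) ->
  exists2 c : 'rV[R]_n.+1, c != 0 & forall y, y != 0 -> p y <= p c.
Proof.
move=> p_cont p_inv.
pose K := [set y : 'rV[R]_n.+1 | `|y| = 1].
have K_normalize y : y != 0 -> K (`|y|^-1 *: y).
  by move=> y0; rewrite /K /= normrZ normfV normr_id mulVf // normr_eq0.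
have K_neq0 y : K y -> y != 0.
  by rewrite /K /=; apply: contra_eqN => /eqP ->; rewrite normr0 eq_sym oner_eq0.
have K_nonempty : K !=set0.
  have e0 : ebase R (@ord0 n) != 0.
    by apply/eqP => /rowP /(_ ord0); rewrite !mxE eqxx => /eqP; rewrite oner_eq0.
  by exists (`|ebase R (@ord0 n)|^-1 *: ebase R ord0); exact: K_normalize.
have K_compact : compact K.
  apply: bounded_closed_compact.
    by exists 1; split; [exact: real1 | move=> M M1 y /= ->; rewrite ltW].
  have -> : K = (fun y : 'rV[R]_n.+1 => `|y|) @^-1` [set 1] by [].
  apply: preimage_closed; last exact: closed_eq.
  by move=> y _; exact: norm_continuous.
have pK : {within K, continuous p}.
  by apply/continuous_in_subspaceT => z; rewrite inE => /K_neq0 /p_cont.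
have [c Kc c_max] := EVT_max_rV K_nonempty K_compact pK.
exists c; first by apply: K_neq0; rewrite inE in Kc.
move=> y y0; rewrite -(p_inv `|y|^-1 y) ?invr_gt0 ?normr_gt0 //.
by apply: c_max; rewrite inE; exact: K_normalize.
Qed.

End sphere.

Section frames.
Variable R : realType.

Definition quadform N (H : 'M[R]_N) (a : R) (z : 'rV[R]_N) : R :=
  (z *m H *m z^T) 0 0 + a * dotv z z.

Lemma dotv_frame m N (E : 'M[R]_(m, N)) (b : 'rV[R]_m) :
  E *m E^T = 1%:M -> dotv (b *m E) (b *m E) = \sum_i b 0 i ^+ 2.
Proof.
move=> EEt; rewrite dotvE trmx_mul mulmxA -[b *m E *m E^T]mulmxA EEt mulmx1 mxE.
by apply: eq_bigr => i _; rewrite mxE expr2.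
Qed.

Lemma quadform_frame m N (E : 'M[R]_(m, N)) (H : 'M[R]_N) (a : R)
    (lam : 'rV[R]_m) (b : 'rV[R]_m) :
  E *m E^T = 1%:M -> E *m H *m E^T + a *: 1%:M = diag_mx lam ->
  quadform H a (b *m E) = \sum_i b 0 i ^+ 2 * lam 0 i.
Proof.
move=> EEt HE.
have bEHE : (b *m E) *m H *m (b *m E)^T = b *m (E *m H *m E^T) *m b^T.
  by rewrite trmx_mul !mulmxA.
have bEbE : dotv (b *m E) (b *m E) = (b *m b^T) 0 0.
  by rewrite dotvE trmx_mul mulmxA -[b *m E *m E^T]mulmxA EEt mulmx1.
have scaleE : a * (b *m b^T) 0 0 = (b *m (a *: 1%:M) *m b^T) 0 0.
  by rewrite scalemx1 mul_mx_scalar -scalemxAl [RHS]mxE.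
have addE (A B : 'M[R]_1) : A 0 0 + B 0 0 = (A + B) 0 0 by rewrite mxE.
rewrite /quadform bEHE bEbE scaleE addE -mulmxDl -mulmxDr HE mul_mx_diag mxE.
by apply: eq_bigr => i _; rewrite !mxE expr2 mulrC mulrA.
Qed.

Lemma rank_rowsub_frame m N k (E : 'M[R]_(m, N)) (f : 'I_k -> 'I_m) :
  E *m E^T = 1%:M -> injective f -> \rank (rowsub f E) = k.
Proof.
move=> EEt f_inj; apply/eqP; change (row_free (rowsub f E)).
apply/row_freeP; exists (rowsub f E)^T.
rewrite rowsubE trmx_mul mulmxA -[_ *m E *m E^T]mulmxA EEt mulmx1.
rewrite mul_rowsub_mx mul1mx; apply/matrixP => i j.
by rewrite !mxE (inj_eq f_inj) eq_sym.
Qed.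

Lemma rowsub_support m k (f : 'I_k -> 'I_m) (S : {set 'I_m}) (a : 'rV[R]_k) i :
  (forall l, f l \in S) -> i \notin S -> (a *m rowsub f 1%:M) 0 i = 0.
Proof.
move=> fS iS; rewrite mxE big1 // => l _; rewrite !mxE.
by rewrite (_ : f l == i = false) ?mulr0 //; apply: contraNF iS => /eqP <-.
Qed.

(* Both spans lie in the [n]-dimensional space [x0^perp], so they meet
   nontrivially as soon as their dimensions add up to more than [n]. *)
Lemma tangent_frames_meet n (x0 : 'rV[R]_n.+1) (E1 E2 : 'M[R]_(n, n.+1))
    (S1 S2 : {set 'I_n}) :
  x0 != 0 -> tangent_frame x0 E1 -> tangent_frame x0 E2 ->
  (n < #|S1| + #|S2|)%N ->
  exists b1 b2 : 'rV[R]_n, [/\ b1 *m E1 = b2 *m E2, b1 *m E1 != 0,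
    forall i, i \notin S1 -> b1 0 i = 0 & forall i, i \notin S2 -> b2 0 i = 0].
Proof.
move=> x0_neq0 [E1o E1x] [E2o E2x] card_S.
pose A1 := rowsub (@enum_val _ (mem S1)) E1.
pose A2 := rowsub (@enum_val _ (mem S2)) E2.
have rA1 : \rank A1 = #|S1| by apply: rank_rowsub_frame E1o enum_val_inj.
have rA2 : \rank A2 = #|S2| by apply: rank_rowsub_frame E2o enum_val_inj.
have A12_ker : (A1 + A2 <= kermx x0^T)%MS.
  rewrite addsmx_sub !sub_kermx /A1 /A2 !mul_rowsub_mx E1x E2x.
  by apply/andP; split; apply/eqP/matrixP => i j; rewrite !mxE.
have rker : \rank (kermx x0^T) = n.
  by rewrite mxrank_ker mxrank_tr rank_rV x0_neq0 subn1.
have := mxrankS A12_ker; have := mxrank_sum_cap A1 A2.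
rewrite rA1 rA2 rker => sum_cap sum_le.
have : (0 < \rank (A1 :&: A2)%MS)%N by lia.
rewrite lt0n mxrank_eq0 => cap_neq0.
have [k zk] : exists k, row k (A1 :&: A2)%MS != 0.
  apply/existsP; apply: contraNT cap_neq0 => /existsPn rows0.
  by apply/eqP/row_matrixP => k; rewrite row0; apply/eqP/negbNE.
have /submxP [a1 za1] := submx_trans (row_sub k _) (capmxSl A1 A2).
have /submxP [a2 za2] := submx_trans (row_sub k _) (capmxSr A1 A2).
exists (a1 *m rowsub (@enum_val _ (mem S1)) 1%:M),
       (a2 *m rowsub (@enum_val _ (mem S2)) 1%:M).
rewrite -!mulmxA -!rowsubE -/A1 -/A2 -za1 -za2; split => // i.
- by apply: rowsub_support => l; exact: enum_valP.
- by apply: rowsub_support => l; exact: enum_valP.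
Qed.

Lemma sum_sqr_weight_ge n (b d : 'rV[R]_n) (S : {set 'I_n}) i0 :
  (forall i, i \notin S -> b 0 i = 0) -> (forall j, j \in S -> d 0 i0 <= d 0 j) ->
  d 0 i0 * \sum_i b 0 i ^+ 2 <= \sum_i b 0 i ^+ 2 * d 0 i.
Proof.
move=> bS d_min; rewrite mulr_sumr; apply: ler_sum => i _.
have [iS|iS] := boolP (i \in S); last by rewrite bS // expr0n /= mul0r mulr0.
by rewrite mulrC ler_wpM2l ?sqr_ge0 ?d_min.
Qed.

Lemma sum_sqr_weight_le n (b d : 'rV[R]_n) (S : {set 'I_n}) i0 :
  (forall i, i \notin S -> b 0 i = 0) -> (forall j, j \in S -> d 0 j <= d 0 i0) ->
  \sum_i b 0 i ^+ 2 * d 0 i <= d 0 i0 * \sum_i b 0 i ^+ 2.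
Proof.
move=> bS d_max; rewrite mulr_sumr; apply: ler_sum => i _.
have [iS|iS] := boolP (i \in S); last by rewrite bS // expr0n /= mul0r mulr0.
by rewrite [X in _ <= X]mulrC ler_wpM2l ?sqr_ge0 ?d_max.
Qed.

(* Courant-Fischer style: evaluate both forms at a nonzero vector common to
   the span of the [S1]-rows of [E1] and that of the [S2]-rows of [E2]. *)
Lemma frame_eigen_le n (x0 : 'rV[R]_n.+1) (E1 E2 : 'M[R]_(n, n.+1))
    (lam1 lam2 : 'rV[R]_n) (q1 q2 : 'rV[R]_n.+1 -> R) (S1 S2 : {set 'I_n}) :
  x0 != 0 -> tangent_frame x0 E1 -> tangent_frame x0 E2 ->
  (forall z, z *m x0^T = 0 -> q1 z <= q2 z) ->
  (forall b, q1 (b *m E1) = \sum_i b 0 i ^+ 2 * lam1 0 i) ->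
  (forall b, q2 (b *m E2) = \sum_i b 0 i ^+ 2 * lam2 0 i) ->
  (n < #|S1| + #|S2|)%N ->
  exists i1 i2, [/\ i1 \in S1, i2 \in S2 & lam1 0 i1 <= lam2 0 i2].
Proof.
move=> x0_neq0 fr1 fr2 q12 q1E q2E card_S.
have card_gt0 (S S' : {set 'I_n}) : (n < #|S| + #|S'|)%N -> (0 < #|S|)%N.
  have : (#|S'| <= n)%N by rewrite -[X in (_ <= X)%N]card_ord max_card.
  lia.
have /card_gt0P [j1 j1S1] := card_gt0 _ _ card_S.
have /card_gt0P [j2 j2S2] : (0 < #|S2|)%N by apply: (card_gt0 _ S1); rewrite addnC.
case: (@arg_minP _ R _ j1 (mem S1) (fun i => lam1 0 i) j1S1) => i1 i1S1 i1_min.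
case: (@arg_maxP _ R _ j2 (mem S2) (fun i => lam2 0 i) j2S2) => i2 i2S2 i2_max.
exists i1, i2; split => //.
have [b1 [b2 [b12 z_neq0 b1S1 b2S2]]] := tangent_frames_meet x0_neq0 fr1 fr2 card_S.
have zx0 : b1 *m E1 *m x0^T = 0 by rewrite -mulmxA fr1.2 mulmx0.
have lo : lam1 0 i1 * dotv (b1 *m E1) (b1 *m E1) <= q1 (b1 *m E1).
  by rewrite dotv_frame ?fr1.1 // q1E (sum_sqr_weight_ge b1S1).
have up : q2 (b1 *m E1) <= lam2 0 i2 * dotv (b1 *m E1) (b1 *m E1).
  by rewrite b12 dotv_frame ?fr2.1 // q2E (sum_sqr_weight_le b2S2).
rewrite -(ler_pM2r (dotv_gt0 z_neq0)).
exact: le_trans lo (le_trans (q12 _ zx0) up).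
Qed.

Lemma sorting_perm n (f : 'I_n -> R) :
  exists s : {perm 'I_n}, forall k l : 'I_n, (k <= l)%N -> f (s k) <= f (s l).
Proof.
pose r := [rel i j : 'I_n | f i <= f j].
pose s0 := sort r (enum 'I_n).
have size_s0 : size s0 = n by rewrite size_sort size_enum_ord.
have uniq_s0 : uniq s0 by rewrite sort_uniq enum_uniq.
have sorted_s0 : sorted r s0 by apply: sort_sorted => i j; exact: le_total.
pose g k := nth k s0 k.
have g_inj : injective g.
  move=> k l; rewrite /g (set_nth_default l k) ?size_s0 // => /eqP.
  by rewrite nth_uniq ?size_s0 // => /eqP /val_inj.
exists (perm g_inj) => k l kl; rewrite !permE /g (set_nth_default k l) ?size_s0 //.
apply: (@sorted_leq_nth _ r) => //; rewrite ?inE ?size_s0 //.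
- by move=> a b c; exact: le_trans.
- by move=> a; exact: lexx.
Qed.

Lemma sorted_frame_eigen_le n (x0 : 'rV[R]_n.+1) (E1 E2 : 'M[R]_(n, n.+1))
    (lam1 lam2 : 'rV[R]_n) (q1 q2 : 'rV[R]_n.+1 -> R) (s1 s2 : {perm 'I_n}) :
  x0 != 0 -> tangent_frame x0 E1 -> tangent_frame x0 E2 ->
  (forall z, z *m x0^T = 0 -> q1 z <= q2 z) ->
  (forall b, q1 (b *m E1) = \sum_i b 0 i ^+ 2 * lam1 0 i) ->
  (forall b, q2 (b *m E2) = \sum_i b 0 i ^+ 2 * lam2 0 i) ->
  (forall k l : 'I_n, (k <= l)%N -> lam1 0 (s1 k) <= lam1 0 (s1 l)) ->
  (forall k l : 'I_n, (k <= l)%N -> lam2 0 (s2 k) <= lam2 0 (s2 l)) ->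
  forall k, lam1 0 (s1 k) <= lam2 0 (s2 k).
Proof.
move=> x0_neq0 fr1 fr2 q12 q1E q2E sorted1 sorted2 k.
pose A := [set l : 'I_n | (k <= l)%N].
pose B := [set l : 'I_n | (l <= k)%N].
have card_AB : (#|A| + #|B| = n.+1)%N.
  rewrite -cardsUI.
  have -> : A :|: B = [set: 'I_n].
    by apply/setP => l; rewrite !inE; case: (leqP k l) => //= /ltnW ->.
  have -> : A :&: B = [set k].
    apply/setP => l; rewrite !inE -eqn_leq eq_sym.
    by apply/eqP/eqP => [/val_inj|->].
  by rewrite cardsT card_ord cards1 addn1.
have card_img : (n < #|s1 @: A| + #|s2 @: B|)%N.
  by rewrite !card_imset ?card_AB //; exact: perm_inj.
have [i1 [i2 []]] := frame_eigen_le x0_neq0 fr1 fr2 q12 q1E q2E card_img.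
move=> /imsetP [l1 + ->] /imsetP [l2 + ->]; rewrite !inE => kl1 l2k le12.
exact: le_trans (sorted1 _ _ kl1) (le_trans le12 (sorted2 _ _ l2k)).
Qed.

End frames.

Section monotone_symmetric_function.
Variables (R : realType) (n : nat) (F : 'rV[R]_n -> R).
Hypothesis F_sym : forall (s : {perm 'I_n}) lam, F (col_perm s lam) = F lam.
Hypothesis F_incr : forall lam (i : 'I_n), Gamma_plus lam ->
  derivable F lam (ebase R i) /\ 0 < 'D_(ebase R i) F lam.

Lemma F_le_shift (nu : 'rV[R]_n) (i : 'I_n) (d : R) :
  Gamma_plus nu -> 0 <= d -> F nu <= F (d *: ebase R i + nu).
Proof.
move=> nu_pos d0.
have shift_pos t : 0 <= t -> Gamma_plus (t *: ebase R i + nu).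
  move=> t0 j; rewrite !mxE; case: (j == i); rewrite ?mulr1 ?mulr0 ?add0r //.
  by rewrite ltr_wpDl.
pose g t := F (t *: ebase R i + nu).
have [||c ci gE] :=
  @MVT_segment R g (fun t => 'D_(ebase R i) F (t *: ebase R i + nu)) 0 d d0.
- move=> t ti; apply: DeriveDef; last exact: derive_line.
  by apply/derivable_line; apply: (F_incr _ (shift_pos _ _)).1; rewrite ltW ?(itvP ti).
- apply: derivable_within_continuous => t ti; apply/derivable_line.
  by apply: (F_incr _ (shift_pos _ _)).1; rewrite (itvP ti).
have : 0 <= g d - g 0.
  by rewrite gE subr0 mulr_ge0 // ltW // (F_incr _ (shift_pos _ _)).2 // (itvP ci).
by rewrite subr_ge0 /g scale0r add0r.
Qed.

Lemma F_monotone (lam mu : 'rV[R]_n) :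
  Gamma_plus lam -> (forall i, lam 0 i <= mu 0 i) -> F lam <= F mu.
Proof.
move=> lam_pos lam_mu.
pose nu k : 'rV[R]_n := \row_i (if (i < k)%N then mu 0 i else lam 0 i).
have nu_pos k : Gamma_plus (nu k).
  move=> i; rewrite mxE; case: ifP => _; last exact: lam_pos.
  exact: lt_le_trans (lam_pos i) (lam_mu i).
suff nu_ge k : (k <= n)%N -> F lam <= F (nu k).
  by rewrite (_ : mu = nu n) ?nu_ge //; apply/rowP => i; rewrite mxE ltn_ord.
elim: k => [|k IHk] kn.
  by rewrite (_ : nu 0%N = lam) //; apply/rowP => i; rewrite mxE.
apply: le_trans (IHk (ltnW kn)) _.
pose i : 'I_n := Ordinal kn.
have -> : nu k.+1 = (mu 0 i - lam 0 i) *: ebase R i + nu k.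
  apply/rowP => j; rewrite !mxE ltnS leq_eqVlt.
  have [->|ji] := eqVneq j i; first by rewrite eqxx ltnn mulr1 subrK.
  rewrite (_ : (j == k :> nat) = false) ?mulr0 ?add0r //.
  by apply: contra_neqF ji => /eqP jk; apply/val_inj.
by apply: F_le_shift; rewrite ?subr_ge0.
Qed.

Lemma F_le_tangent_forms (x0 : 'rV[R]_n.+1) (E1 E2 : 'M[R]_(n, n.+1))
    (lam1 lam2 : 'rV[R]_n) (q1 q2 : 'rV[R]_n.+1 -> R) :
  Gamma_plus lam1 -> x0 != 0 -> tangent_frame x0 E1 -> tangent_frame x0 E2 ->
  (forall z, z *m x0^T = 0 -> q1 z <= q2 z) ->
  (forall b, q1 (b *m E1) = \sum_i b 0 i ^+ 2 * lam1 0 i) ->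
  (forall b, q2 (b *m E2) = \sum_i b 0 i ^+ 2 * lam2 0 i) ->
  F lam1 <= F lam2.
Proof.
move=> lam1_pos x0_neq0 fr1 fr2 q12 q1E q2E.
have [s1 sorted1] := sorting_perm (fun i => lam1 0 i).
have [s2 sorted2] := sorting_perm (fun i => lam2 0 i).
rewrite -(F_sym s1 lam1) -(F_sym s2 lam2); apply: F_monotone => [i|k].
  by rewrite mxE.
by rewrite !mxE; exact: sorted_frame_eigen_le fr1 fr2 q12 q1E q2E sorted1 sorted2 k.
Qed.

End monotone_symmetric_function.

Section sphere_functions.
Variables (R : realType) (n : nat).

Definition radial (u : 'rV[R]_n.+1 -> R) (x : 'rV[R]_n.+1) : R :=
  Num.sqrt (u x ^+ 2 + dotv (grad_sph u x) (grad_sph u x)).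

Lemma radial_gt0 (u : 'rV[R]_n.+1 -> R) x : 0 < u x -> 0 < radial u x.
Proof.
move=> ux_gt0; rewrite sqrtr_gt0 (lt_le_trans (exprn_gt0 2 ux_gt0)) //.
by rewrite lerDl dotv_ge0.
Qed.

Lemma radial_scale (u1 u2 : 'rV[R]_n.+1 -> R) (M : R) x : 0 <= M ->
  u1 x = M * u2 x -> grad_sph u1 x = M *: grad_sph u2 x ->
  radial u1 x = M * radial u2 x.
Proof.
move=> M_ge0 uE gradE; rewrite /radial uE gradE dotvZ exprMn -mulrDr.
by rewrite sqrtrM ?sqr_ge0 // sqrtr_sqr ger0_norm.
Qed.

Lemma convex_frame_diag_pos (u : 'rV[R]_n.+1 -> R) x (E : 'M[R]_(n, n.+1))
    (lam : 'rV[R]_n) :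
  unif_convex_at u x -> tangent_frame x E ->
  E *m hess_sph u x *m E^T + u x *: 1%:M = diag_mx lam -> Gamma_plus lam.
Proof.
move=> u_convex [EEt Ex] diagE i.
pose b : 'rV[R]_n := delta_mx 0 i.
have sum_b2 (w : 'rV[R]_n) : \sum_j b 0 j ^+ 2 * w 0 j = w 0 i.
  rewrite (bigD1 i) //= big1 => [|j ji].
    by rewrite !mxE !eqxx expr1n mul1r addr0.
  by rewrite !mxE (negbTE ji) andbF expr0n mul0r.
have b_unit : \sum_j b 0 j ^+ 2 = 1.
  have := sum_b2 (const_mx 1); rewrite [const_mx 1 0 i]mxE => <-.
  by apply: eq_bigr => j _; rewrite [const_mx 1 0 j]mxE mulr1.
have bE_tangent : b *m E *m x^T = 0 by rewrite -mulmxA Ex mulmx0.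
have bE_neq0 : b *m E != 0.
  apply/eqP => bE0; move: (dotv_frame b EEt); rewrite b_unit bE0.
  rewrite /dotv big1 => [/eqP|j _]; last by rewrite mxE mul0r.
  by rewrite eq_sym oner_eq0.
have := u_convex _ bE_tangent bE_neq0.
by rewrite -/(quadform _ _ _) (quadform_frame _ EEt diagE) sum_b2.
Qed.

Lemma ratio_max_contact (u1 u2 : 'rV[R]_n.+1 -> R) :
  smooth_sphere u1 -> smooth_sphere u2 ->
  (forall x, on_sphere x -> 0 < u1 x) -> (forall x, on_sphere x -> 0 < u2 x) ->
  exists p M, [/\ on_sphere p, 0 < M,
    forall y, y != 0 -> ext0 u1 y <= M * ext0 u2 y & ext0 u1 p = M * ext0 u2 p].
Proof.
move=> s1 s2 u1_pos u2_pos.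
have ext0_pos u y : (forall x, on_sphere x -> 0 < u x) -> y != 0 -> 0 < ext0 u y.
  by move=> u_pos y0; apply: u_pos; exact: sphere_normalize.
pose psi y := ext0 u1 y / ext0 u2 y.
have psi_cont y : y != 0 -> {for y, continuous psi}.
  move=> y0; have c1 : {for y, continuous (ext0 u1)} := (s1 [::] y y0).1.
  have c2 : {for y, continuous (ext0 u2)} := (s2 [::] y y0).1.
  by apply: (cvgM c1 (cvgV _ c2)); rewrite gt_eqF ?ext0_pos.
have psiZ (t : R) y : 0 < t -> psi (t *: y) = psi y.
  by move=> t0; rewrite /psi !ext0Z.
have [c c0 c_max] := scale_invariant_max psi_cont psiZ.
have p_sphere := sphere_normalize c0.
have psi_p : psi ((enorm c)^-1 *: c) = psi c by rewrite psiZ // invr_gt0 enorm_gt0.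
exists ((enorm c)^-1 *: c), (psi c); split => //.
- by rewrite divr_gt0 ?ext0_pos.
- move=> y y0; rewrite -ler_pdivrMr ?ext0_pos //; exact: c_max.
- by rewrite -psi_p /psi divfK // gt_eqF // ext0_pos // sphere_neq0.
Qed.

Lemma contact_grad_hess (u1 u2 : 'rV[R]_n.+1 -> R) (M : R) p :
  smooth_sphere u1 -> smooth_sphere u2 -> on_sphere p ->
  (forall y, y != 0 -> ext0 u1 y <= M * ext0 u2 y) -> ext0 u1 p = M * ext0 u2 p ->
  grad_sph u1 p = M *: grad_sph u2 p /\
  forall z, quadform (hess_sph u1 p) (u1 p) z <= M * quadform (hess_sph u2 p) (u2 p) z.
Proof.
move=> s1 s2 sp le_M eq_p.
have p_neq0 := sphere_neq0 sp.
have contact z := contact_derive (@open_neq0 R n.+1) z s1 s2 p_neq0 le_M eq_p.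
split; first by apply/rowP => i; rewrite !mxE (contact _).1.
move=> z; rewrite /quadform -(ext0_sphere u1 sp) eq_p (ext0_sphere u2 sp).
have hessE u : smooth_sphere u ->
    (z *m hess_sph u p *m z^T) 0 0 = 'D_z ('D_z (ext0 u)) p.
  by move=> su; rewrite (smooth_derive2E (@open_neq0 R n.+1) z su p_neq0).
rewrite [X in X + _ <= _](hessE u1 s1) [X in _ <= _ * (X + _)](hessE u2 s2).
by rewrite mulrDr mulrA lerD2r (contact z).2.
Qed.

End sphere_functions.

Lemma balance_powR_le (R : realType) (beta M g1 g2 f1 f2 : R) :
  0 <= beta -> 0 < M -> 0 <= g1 -> 0 <= f1 -> 0 < f2 -> f1 <= M * f2 ->
  g1 * f1 `^ beta = g2 * f2 `^ beta -> g2 * M `^ (- beta) <= g1.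
Proof.
move=> beta_ge0 M_gt0 g1_ge0 f1_ge0 f2_gt0 f12 g12.
have f2b_gt0 : 0 < f2 `^ beta by rewrite powR_gt0.
rewrite powRN ler_pdivrMr ?powR_gt0 // -(ler_pM2r f2b_gt0) -g12 -mulrA.
rewrite -powRM ?(ltW M_gt0) ?(ltW f2_gt0) // ler_wpM2l // ge0_ler_powR //.
by rewrite nnegrE mulr_ge0 ?ltW.
Qed.

Section comparison.
Variables (R : realType) (n : nat) (beta : R) (F : 'rV[R]_n -> R).
Variables (G : 'rV[R]_n.+1 -> R -> R -> R) (c : R).
Hypothesis beta_gt0 : 0 < beta.
Hypothesis F_sym : forall (s : {perm 'I_n}) lam, F (col_perm s lam) = F lam.
Hypothesis F_pos : forall lam, Gamma_plus lam -> 0 < F lam.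
Hypothesis F_hom : forall (t : R) lam, 0 < t -> Gamma_plus lam -> F (t *: lam) = t * F lam.
Hypothesis F_incr : forall lam (i : 'I_n), Gamma_plus lam ->
  derivable F lam (ebase R i) /\ 0 < 'D_(ebase R i) F lam.
Hypothesis G_pos : forall x s1 s2, on_sphere x -> 0 < s1 -> 0 < s2 -> 0 < G x s1 s2.
Hypothesis G_scaling : forall x s1 s2 m, on_sphere x -> 0 < s1 -> 0 < s2 -> 0 < m ->
  G x (m * s1) (m * s2) >= G x s1 s2 * m `^ (- beta) -> m <= 1.

Lemma solution_le (u1 u2 : 'rV[R]_n.+1 -> R) :
  is_solution F beta G c u1 -> is_solution F beta G c u2 ->
  forall x, on_sphere x -> u1 x <= u2 x.
Proof.
move=> [s1 [u1_pos [cvx1 eq1]]] [s2 [u2_pos [cvx2 eq2]]] x sx.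
have [p [M [sp M_gt0 le_M eq_p]]] := ratio_max_contact s1 s2 u1_pos u2_pos.
have u2p_gt0 := u2_pos p sp.
have uE : u1 p = M * u2 p by rewrite -(ext0_sphere u1 sp) -(ext0_sphere u2 sp).
have [gradE hess_le] := contact_grad_hess s1 s2 sp le_M eq_p.
suff M_le1 : M <= 1.
  have := le_M x (sphere_neq0 sx); rewrite !ext0_sphere // => /le_trans; apply.
  by rewrite ler_piMl // ltW // u2_pos.
have [E1 [lam1 [fr1 [diag1 eqn1]]]] := eq1 p sp.
have [E2 [lam2 [fr2 [diag2 eqn2]]]] := eq2 p sp.
have lam1_pos := convex_frame_diag_pos (cvx1 p sp) fr1 diag1.
have lam2_pos := convex_frame_diag_pos (cvx2 p sp) fr2 diag2.
have F_le : F lam1 <= M * F lam2.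
  rewrite -F_hom //; apply: (F_le_tangent_forms F_sym F_incr lam1_pos
    (sphere_neq0 sp) fr1 fr2 (fun z _ => hess_le z)) => b.
    exact: quadform_frame fr1.1 diag1.
  rewrite (quadform_frame _ fr2.1 diag2) mulr_sumr.
  by apply: eq_bigr => i _; rewrite mxE mulrCA.
have rhoE := radial_scale (ltW M_gt0) uE gradE.
apply: (G_scaling sp u2p_gt0 (radial_gt0 u2p_gt0) M_gt0).
rewrite -uE -rhoE; apply: (balance_powR_le (ltW beta_gt0) M_gt0 _ _ _ F_le).
- by apply/ltW/G_pos; rewrite ?radial_gt0 ?u1_pos.
- exact/ltW/F_pos.
- exact: F_pos.
- by rewrite [LHS]eqn1 [RHS]eqn2.
Qed.

End comparison.

Theorem theorem5p2 (R : realType) (n : nat) (beta : R)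
  (F : 'rV[R]_n -> R) (G : 'rV[R]_n.+1 -> R -> R -> R) :
  0 < beta ->
  (forall (s : {perm 'I_n}) (lam : 'rV[R]_n), F (col_perm s lam) = F lam) ->
  (forall lam, Gamma_plus lam -> 0 < F lam) ->
  (forall (t : R) lam, 0 < t -> Gamma_plus lam -> F (t *: lam) = t * F lam) ->
  F (const_mx 1) `^ beta = 1 ->
  (forall lam (i : 'I_n), Gamma_plus lam ->
     derivable F lam (ebase R i) /\ 0 < 'D_(ebase R i) F lam) ->
  (forall x s1 s2, on_sphere x -> 0 < s1 -> 0 < s2 -> 0 < G x s1 s2) ->
  (forall x s1 s2 m, on_sphere x -> 0 < s1 -> 0 < s2 -> 0 < m ->
     G x (m * s1) (m * s2) >= G x s1 s2 * m `^ (- beta) -> m <= 1) ->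
  forall (c : R) (u1 u2 : 'rV[R]_n.+1 -> R),
    is_solution F beta G c u1 -> is_solution F beta G c u2 ->
    forall x, on_sphere x -> u1 x = u2 x.
Proof.
move=> beta_gt0 F_sym F_pos F_hom _ F_incr G_pos G_scaling c u1 u2 sol1 sol2 x sx.
apply/le_anti/andP; split.
- exact: (solution_le beta_gt0 F_sym F_pos F_hom F_incr G_pos G_scaling sol1 sol2).
- exact: (solution_le beta_gt0 F_sym F_pos F_hom F_incr G_pos G_scaling sol2 sol1).
Qed.
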